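(* Let $n \geq 2k \geq 4$ and let $\mathcal F, \mathcal G \subset \binom{[n]}{k}$ be non-trivial, cross-intersecting, initial families. For $P \subset [k+1]$ let $\mathcal F(P) = \{F \setminus P : F \in \mathcal F,\ F \cap [k+1] = P\}$ and $\mathcal G(P) = \{G \setminus P : G \in \mathcal G,\ G \cap [k+1] = P\}$. Let $2 \leq i \leq k/2$ and let $P, Q \in \binom{[k+1]}{i}$ be disjoint. Then $$|\mathcal F(P)| + |\mathcal G(Q)| + |\mathcal G([k+1]\setminus P)| + |\mathcal F([k+1]\setminus Q)| \leq \binom{n-k-1}{k-i} + \binom{n-k-1}{i-1}.$$
   Context: Families are cross-intersecting if every member of one meets every member of the other; a non-empty family is non-trivial if the intersection of all its members is empty. For $k$-sets $A=\{x_1<\dots<x_k\}$, $B=\{y_1<\dots<y_k\}$, $A\prec B$ means $x_i\le y_i$ for all $i$; a family is initial if $A\prec B\in\mathcal F$ implies $A\in\mathcal F$. *)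

From mathcomp Require Import all_boot.
Set Implicit Arguments. Unset Strict Implicit. Unset Printing Implicit Defensive.

(* Ground set [n] = {1..n} is modelled by 'I_n (element i <-> i+1). *)

Definition sorted_elems (n : nat) (A : {set 'I_n}) : seq nat :=
  sort leq [seq val x | x <- enum A].

Definition shift_le (n k : nat) (A B : {set 'I_n}) : bool :=
  [forall j : 'I_k, nth 0 (sorted_elems A) j <= nth 0 (sorted_elems B) j].

Definition k_uniform (n k : nat) (F : {set {set 'I_n}}) : Prop :=
  forall A : {set 'I_n}, A \in F -> #|A| = k.

Definition cross_intersecting (n : nat) (F G : {set {set 'I_n}}) : Prop :=
  forall A B : {set 'I_n}, A \in F -> B \in G -> A :&: B != set0.

Definition nontrivial (n : nat) (F : {set {set 'I_n}}) : Prop :=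
  F != set0 /\ \bigcap_(A in F) A = set0.

Definition initial (n k : nat) (F : {set {set 'I_n}}) : Prop :=
  forall A B : {set 'I_n}, #|A| = k -> B \in F -> shift_le k A B -> A \in F.

(* [k+1] = {1,...,k+1}, i.e. indices 0..k *)
Definition firstk (n m : nat) : {set 'I_n} := [set x : 'I_n | val x < m].

Definition restr (n k : nat) (F : {set {set 'I_n}}) (P : {set 'I_n})
  : {set {set 'I_n}} :=
  [set A :\: P | A in [set A in F | A :&: firstk n k.+1 == P]].

From mathcomp Require Import all_boot zify.
Set Implicit Arguments. Unset Strict Implicit. Unset Printing Implicit Defensive.

(* Write L = [k+1] and Y = [n] \ L, so |Y| = n - k - 1.  The four families
   a = F(P), b = G(Q), c = G(L \ P), d = F(L \ Q) live in the layers of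
   (k-i)-subsets (a, b) and (i-1)-subsets (c, d) of Y, and satisfy:
   a and c cross-intersect, b and d cross-intersect, and every (i-1)-subset
   of a member of b meets every member of a.  The last property is where
   initiality enters: for A ∈ F, B ∈ G meeting L in P and Q, the parts of A
   and B outside L overlap in more than |L \ (P ∪ Q)| = k+1-2i points, since
   otherwise shifting the overlap of A into L \ (P ∪ Q) gives a member of F
   disjoint from B.  The bound then follows from an abstract four-family
   inequality proved by the normalized matching property of the bipartite
   graphs "disjoint from" and "contained in" between two layers of Y, i.e.
   by double counting in biregular bipartite graphs. *)

Lemma nth_sorted_leq (s : seq nat) j v : sorted leq s -> j < size s ->
  (nth 0 s j <= v) = (j < count (fun x => x <= v) s).
Proof.
elim: s j => [|x s IH] j //= Hs Hj.
have Hs' : sorted leq s by apply: path_sorted Hs.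
have Hall : all (leq x) s by apply: order_path_min Hs; exact: leq_trans.
have count0 : v < x -> count (fun x => x <= v) s = 0.
  move=> Hvx; rewrite (@eq_in_count _ _ pred0) ?count_pred0 // => y Hy /=.
  by apply/negbTE; rewrite -ltnNge (leq_trans Hvx) ?(allP Hall y Hy).
case: j Hj => [|j] Hj /=; case: (leqP x v) => Hxv //=.
- by rewrite count0.
- by rewrite add1n ltnS IH.
rewrite count0 // add0n ltn0; apply/negbTE; rewrite -ltnNge.
by apply: (leq_trans Hxv); apply: (allP Hall); apply: mem_nth.
Qed.

Lemma count_sorted_elems n (A : {set 'I_n}) v :
  count (fun x => x <= v) (sorted_elems A) = #|[set x in A | val x <= v]|.
Proof.
rewrite /sorted_elems count_sort count_map cardE -size_filter /enum_mem.
by rewrite -filter_predI; congr size; apply: eq_filter => x; rewrite /= !inE andbC.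
Qed.

Lemma size_sorted_elems n (A : {set 'I_n}) : size (sorted_elems A) = #|A|.
Proof. by rewrite /sorted_elems size_sort size_map cardE. Qed.

Lemma shift_le_count n k (A B : {set 'I_n}) : #|A| = k -> #|B| = k ->
  (forall v, #|[set x in B | val x <= v]| <= #|[set x in A | val x <= v]|) ->
  shift_le k A B.
Proof.
move=> HA HB H; apply/forallP => j.
have sortedE (S : {set 'I_n}) : sorted leq (sorted_elems S).
  by apply: sort_sorted; exact: leq_total.
have jA : j < size (sorted_elems A) by rewrite size_sorted_elems HA.
have jB : j < size (sorted_elems B) by rewrite size_sorted_elems HB.
rewrite nth_sorted_leq // count_sorted_elems.
by apply: leq_trans (H _); rewrite -count_sorted_elems -nth_sorted_leq.
Qed.

Lemma shift_le_swap n k (A I J : {set 'I_n}) (t : nat) :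
  #|A| = k -> I \subset A -> [disjoint J & A] -> #|J| = #|I| ->
  (forall x, x \in J -> val x <= t) -> (forall x, x \in I -> t < val x) ->
  #|(A :\: I) :|: J| = k /\ shift_le k ((A :\: I) :|: J) A.
Proof.
move=> HA HIA HJA HJI HJt HIt.
have HJAI : [disjoint A :\: I & J].
  by rewrite disjoint_sym; apply: disjointWr HJA; exact: subsetDl.
have cardA' : #|(A :\: I) :|: J| = k.
  rewrite cardsU (disjoint_setI0 HJAI) cards0 subn0 cardsD (setIidPr HIA) HJI.
  by rewrite subnK ?HA // -HA subset_leq_card.
split => //; apply: shift_le_count => // v.
set seg := fun S : {set 'I_n} => [set x in S | val x <= v].
have segU : seg ((A :\: I) :|: J) = seg (A :\: I) :|: seg J.
  by apply/setP => x; rewrite !inE andb_orl.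
have segS S : seg S \subset S by apply/subsetP => x; rewrite inE => /andP [].
have segDI : [disjoint seg (A :\: I) & seg J].
  exact: disjointWl (segS _) (disjointWr (segS _) HJAI).
change (#|seg A| <= #|seg ((A :\: I) :|: J)|).
rewrite segU cardsU (disjoint_setI0 segDI) cards0 subn0.
have segA : #|seg A| = #|seg (A :\: I)| + #|seg A :&: I|.
  rewrite -(cardsID I (seg A)) addnC; congr (_ + _); apply: eq_card => x.
  by rewrite !inE; case: (x \in I); case: (x \in A).
rewrite segA leq_add2l.
case: (leqP v t) => Hvt.
  suff -> : seg A :&: I = set0 by rewrite cards0.
  apply/setP => x; rewrite !inE; case Hx: (x \in I); last by rewrite andbF.
  by rewrite andbT leqNgt (leq_ltn_trans Hvt (HIt x Hx)) andbF.
have -> : seg J = J.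
  apply/setP => x; rewrite inE; case Hx: (x \in J) => //=.
  exact: leq_trans (HJt x Hx) (ltnW Hvt).
by rewrite HJI subset_leq_card ?subsetIr.
Qed.

Lemma leq_bin_half m b g : b <= g -> 2 * g <= m -> 'C(m, b) <= 'C(m, g).
Proof.
elim: g => [|g IH] Hb Hg; first by move: Hb; rewrite leqn0 => /eqP ->.
case: (leqP b g) => Hbg; last by have -> : b = g.+1 by lia.
apply: leq_trans (IH Hbg _) _; first by lia.
rewrite -(@leq_pmul2l g.+1) // mul_bin_left; apply: leq_mul => //; lia.
Qed.

Lemma leq_bin_mid m b a : b <= a -> a + b <= m -> 'C(m, b) <= 'C(m, a).
Proof.
move=> Hba Hm; case: (leqP (2 * a) m) => H; first exact: leq_bin_half.
rewrite -(@bin_sub m a); last by lia.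
apply: leq_bin_half; lia.
Qed.

Lemma leq_card_disjoint (T : finType) (S1 S2 S : {set T}) :
  S1 \subset S -> S2 \subset S -> [disjoint S1 & S2] -> #|S1| + #|S2| <= #|S|.
Proof.
move=> H1 H2 H12; have [_] := leq_card_setU S1 S2; rewrite H12 => /eqP <-.
by apply: subset_leq_card; rewrite subUset H1 H2.
Qed.

Section DoubleCounting.
Variables (X Z : finType) (R : X -> Z -> bool).

Lemma sum_card_exchange (A : {set X}) (B : {set Z}) :
  \sum_(x in A) #|[set z in B | R x z]| = \sum_(z in B) #|[set x in A | R x z]|.
Proof.
have cardE (T : finType) (S : {set T}) (p : pred T) :
    #|[set y in S | p y]| = \sum_(y in S) (p y : nat).
  rewrite -sum1_card big_mkcond [RHS]big_mkcond; apply: eq_bigr => y _.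
  by rewrite !inE; case: (y \in S); case: (p y).
under eq_bigr do rewrite cardE.
under [RHS]eq_bigr do rewrite cardE.
exact: exchange_big.
Qed.

Lemma normalized_matching (SX : {set X}) (SZ : {set Z}) dX dZ :
  0 < dZ ->
  (forall x, x \in SX -> #|[set z in SZ | R x z]| = dX) ->
  (forall z, z \in SZ -> #|[set x in SX | R x z]| = dZ) ->
  forall A : {set X}, A \subset SX ->
  #|A| * #|SZ| <= #|[set z in SZ | [exists x in A, R x z]]| * #|SX|.
Proof.
move=> dZ0 HX HZ A HA; set N := [set z in SZ | [exists x in A, R x z]].
have edges : #|SX| * dX = #|SZ| * dZ.
  rewrite -!sum_nat_const -(eq_bigr _ HX) -(eq_bigr _ HZ).
  exact: sum_card_exchange.
have edgesA : #|A| * dX <= #|N| * dZ.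
  have -> : #|A| * dX = \sum_(z in SZ) #|[set x in A | R x z]|.
    rewrite -sum_nat_const -sum_card_exchange; apply: eq_bigr => x Hx.
    by rewrite HX // (subsetP HA).
  have outsideN z : z \in SZ -> z \notin N -> #|[set x in A | R x z]| = 0.
    move=> Hz; rewrite inE Hz /= => /existsPn HzN; apply/eqP; rewrite cards_eq0.
    by apply/eqP/setP => x; rewrite !inE; apply/negbTE; exact: HzN.
  rewrite (bigID (mem N)) /= [E in _ + E]big1 => [|z /andP [Hz HzN]]; last first.
    exact: outsideN.
  rewrite addn0 -sum_nat_const (eq_bigl (mem N)) => [|z]; last first.
    by rewrite /N !inE; case: (z \in SZ).
  apply: leq_sum => z /=; rewrite inE => /andP [Hz _]; rewrite -(HZ z Hz).
  by apply/subset_leq_card/subsetP => x; rewrite !inE => /andP [Hx ->]; rewrite (subsetP HA).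
rewrite -(leq_pmul2r dZ0) -mulnA -edges mulnA (mulnAC #|A|) (mulnAC #|N|).
exact: leq_mul.
Qed.
End DoubleCounting.

Definition layer (T : finType) (Y : {set T}) (m : nat) : {set {set T}} :=
  [set S : {set T} | S \subset Y & #|S| == m].

Lemma card_layer (T : finType) (Y : {set T}) m : #|layer Y m| = 'C(#|Y|, m).
Proof. exact: cards_draws. Qed.

Section LayerDegrees.
Variables (T : finType) (Y : {set T}).

Lemma card_layer_disjoint (S : {set T}) b : S \subset Y ->
  #|[set V in layer Y b | [disjoint S & V]]| = 'C(#|Y| - #|S|, b).
Proof.
move=> HS; rewrite -(cardsDS HS) -card_layer; apply: eq_card => V.
rewrite !inE subsetD [[disjoint S & V]]disjoint_sym.
by case: (V \subset Y); case: [disjoint V & S]; case: (#|V| == b).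
Qed.

Lemma card_layer_sub (U : {set T}) b : U \subset Y ->
  #|[set V in layer Y b | V \subset U]| = 'C(#|U|, b).
Proof.
move=> HU; rewrite -card_layer; apply: eq_card => V; rewrite !inE.
case HVU: (V \subset U); last by rewrite andbF.
by rewrite (subset_trans HVU HU) andbT.
Qed.

(* Number of a-subsets of Y containing a given V ⊆ Y with |V| <= a:
   they correspond to the (a - |V|)-subsets of Y \ V via U |-> U \ V. *)
Lemma card_layer_sup (V : {set T}) a : V \subset Y -> #|V| <= a ->
  #|[set U in layer Y a | V \subset U]| = 'C(#|Y| - #|V|, a - #|V|).
Proof.
move=> HV Ha; rewrite -(cardsDS HV) -card_layer.
have -> : layer (Y :\: V) (a - #|V|)
        = (fun U => U :\: V) @: [set U in layer Y a | V \subset U].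
  apply/setP => W; rewrite inE subsetD; apply/idP/imsetP.
  - case/andP=> [/andP [HWY HWV] /eqP HWc]; exists (W :|: V).
      rewrite !inE subsetUr subUset HWY HV cardsU (disjoint_setI0 HWV) cards0.
      by rewrite subn0 HWc subnK ?eqxx.
    by rewrite setDUl setDv setU0 (setDidPl HWV).
  - case=> U; rewrite !inE => /andP [/andP [HUY /eqP HUc] HVU] ->.
    rewrite (subset_trans (subsetDl U V) HUY) cardsDS // HUc eqxx andbT /=.
    by rewrite -setI_eq0 setIDAC setDIl setDv setI0.
symmetry; apply: card_in_imset => U1 U2; rewrite !inE.
move=> /andP [_ H1] /andP [_ H2] E.
by rewrite -(setID U1 V) -(setID U2 V) (setIidPr H1) (setIidPr H2) E.
Qed.

End LayerDegrees.

(* Arithmetic core of the four-family inequality: with x = |layer al| and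
   z = |layer be|, the families a, b, c, d and the shadows na, nb satisfy
   these relations, and they force |a| + |b| + |c| + |d| <= x + z. *)
Lemma four_families_arith x z a b c d na nb :
  0 < x -> z <= x -> a + b <= x ->
  a * z <= na * x -> b * z <= nb * x -> c + na <= z -> d + nb <= z ->
  a + b + c + d <= x + z.
Proof.
move=> x0 zx abx ha hb hc hd; rewrite -(leq_pmul2r x0).
have hc' : c * x + a * z <= z * x by have := leq_mul hc (leqnn x); nia.
have hd' : d * x + b * z <= z * x by have := leq_mul hd (leqnn x); nia.
have hab : (a + b) * (x - z) <= x * (x - z) by apply: leq_mul.
nia.
Qed.

Section FourFamilies.
Variables (T : finType) (Y : {set T}) (al be : nat).
Hypotheses (be_le_al : be <= al) (al_be_le : al + be <= #|Y|).

Definition disjoint_shadow (A : {set {set T}}) : {set {set T}} :=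
  [set V in layer Y be | [exists S in A, [disjoint S & V]]].

Definition upper_shadow (B : {set {set T}}) : {set {set T}} :=
  [set U in layer Y al | [exists V in B, V \subset U]].

Lemma disjoint_shadow_matching (A : {set {set T}}) : A \subset layer Y al ->
  #|A| * #|layer Y be| <= #|disjoint_shadow A| * #|layer Y al|.
Proof.
move=> HA.
apply: (normalized_matching (R := fun S V : {set T} => [disjoint S & V])
   (dX := 'C(#|Y| - al, be)) (dZ := 'C(#|Y| - be, al)) _ _ _ HA).
- by rewrite bin_gt0; lia.
- by move=> S; rewrite inE => /andP [HS /eqP <-]; rewrite card_layer_disjoint.
- move=> V; rewrite inE => /andP [HV /eqP HVc].
  rewrite -HVc -(card_layer_disjoint al HV); apply: eq_card => S.
  by rewrite !inE disjoint_sym.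
Qed.

Lemma upper_shadow_matching (B : {set {set T}}) : B \subset layer Y be ->
  #|B| * #|layer Y al| <= #|upper_shadow B| * #|layer Y be|.
Proof.
move=> HB.
apply: (normalized_matching (R := fun V U : {set T} => V \subset U)
   (dX := 'C(#|Y| - be, al - be)) (dZ := 'C(al, be)) _ _ _ HB).
- by rewrite bin_gt0.
- move=> V; rewrite inE => /andP [HV /eqP HVc].
  by rewrite card_layer_sup // HVc.
- by move=> U; rewrite inE => /andP [HU /eqP <-]; rewrite card_layer_sub.
Qed.

Lemma four_families_bound (a b c d : {set {set T}}) :
  a \subset layer Y al -> b \subset layer Y al ->
  c \subset layer Y be -> d \subset layer Y be ->
  (forall S V : {set T}, S \in a -> V \in c -> ~~ [disjoint S & V]) ->
  (forall U V : {set T}, U \in b -> V \in d -> ~~ [disjoint U & V]) ->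
  (forall S U V : {set T}, S \in a -> U \in b -> V \subset U -> #|V| = be ->
     ~~ [disjoint S & V]) ->
  #|a| + #|b| + #|c| + #|d| <= 'C(#|Y|, al) + 'C(#|Y|, be).
Proof.
move=> Ha Hb Hc Hd Hac Hbd Hab; rewrite -!card_layer.
set Xs := layer Y al; set Zs := layer Y be.
have x0 : 0 < #|Xs| by rewrite card_layer bin_gt0; lia.
have z0 : 0 < #|Zs| by rewrite card_layer bin_gt0; lia.
have zx : #|Zs| <= #|Xs| by rewrite !card_layer leq_bin_mid.
have shadowZ (A : {set {set T}}) : disjoint_shadow A \subset Zs.
  by apply/subsetP => V; rewrite inE => /andP [].
have shadowX (B : {set {set T}}) : upper_shadow B \subset Xs.
  by apply/subsetP => U; rewrite inE => /andP [].
set Na := disjoint_shadow a.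
(* b avoids the upper shadow of Na, which is at least as large as a. *)
have a_le : #|a| <= #|upper_shadow Na|.
  rewrite -(leq_pmul2r z0); apply: leq_trans (disjoint_shadow_matching Ha) _.
  exact: upper_shadow_matching.
have b_avoids : #|b| + #|upper_shadow Na| <= #|Xs|.
  apply: leq_card_disjoint Hb (shadowX _) _.
  rewrite -setI_eq0; apply/eqP/setP => U.
  rewrite !inE; apply/negbTE/negP => /andP [Ub /andP [_ /existsP [V]]].
  rewrite inE => /andP [/andP [VZ /existsP [S /andP [Sa SV]]] VU].
  by move: VZ; rewrite inE => /andP [_ /eqP /(Hab S U V Sa Ub VU)]; rewrite SV.
have shadow_avoids (e f : {set {set T}}) :
    (forall S V : {set T}, S \in e -> V \in f -> ~~ [disjoint S & V]) ->
    f \subset Zs -> #|f| + #|disjoint_shadow e| <= #|Zs|.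
  move=> Hef Hf; apply: leq_card_disjoint Hf (shadowZ _) _; rewrite -setI_eq0.
  apply/eqP/setP => V; rewrite !inE; apply/negbTE/negP.
  case/andP=> [Vf /andP [_ /existsP [S /andP [Se SV]]]].
  by move: (Hef S V Se Vf); rewrite SV.
have ab_le : #|a| + #|b| <= #|Xs|.
  by apply: leq_trans b_avoids; rewrite addnC leq_add2l.
exact: (four_families_arith x0 zx ab_le (disjoint_shadow_matching Ha)
          (disjoint_shadow_matching Hb) (shadow_avoids _ _ Hac Hc)
          (shadow_avoids _ _ Hbd Hd)).
Qed.

End FourFamilies.

Lemma card_firstk n m : m <= n -> #|firstk n m| = m.
Proof.
move=> Hm; have -> : firstk n m = widen_ord Hm @: [set: 'I_m].
  apply/setP => x; rewrite inE; apply/idP/imsetP => [Hx | [y _ ->]].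
    by exists (Ordinal Hx) => //; apply: val_inj.
  exact: (ltn_ord y).
rewrite card_imset ?cardsT ?card_ord // => y1 y2 /(congr1 val) E.
exact: val_inj.
Qed.

Lemma restrP n k (F : {set {set 'I_n}}) (R T : {set 'I_n}) :
  reflect (exists2 A, A \in F & A :&: firstk n k.+1 = R /\ T = A :\: R)
          (T \in restr k F R).
Proof.
apply: (iffP imsetP) => [[A]|[A HA [HAL ->]]].
  by rewrite inE => /andP [HA /eqP HAL] ->; exists A.
by exists A => //; rewrite inE HA HAL eqxx.
Qed.

Lemma restr_layer n k (F : {set {set 'I_n}}) (R : {set 'I_n}) :
  k_uniform k F -> R \subset firstk n k.+1 ->
  restr k F R \subset layer (~: firstk n k.+1) (k - #|R|).
Proof.
move=> HF HR; apply/subsetP => T /restrP [A HA [HAL ->]].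
have HRA : R \subset A by rewrite -HAL subsetIl.
rewrite inE cardsDS // HF // eqxx andbT; apply/subsetP => x /setDP [xA xR].
by rewrite !inE; apply: contra xR => xL; rewrite -HAL !inE xA xL.
Qed.

(* Restrictions to disjoint traces of cross-intersecting families are
   cross-intersecting: the common points must lie outside [k+1]. *)
Lemma restr_cross n k (F G : {set {set 'I_n}}) (R S T V : {set 'I_n}) :
  cross_intersecting F G -> R :&: S = set0 ->
  T \in restr k F R -> V \in restr k G S -> ~~ [disjoint T & V].
Proof.
move=> HFG HRS /restrP [A HA [HAL ->]] /restrP [B HB [HBL ->]].
have /set0Pn [x] := HFG A B HA HB; rewrite inE => /andP [xA xB].
have xL : ~~ (val x < k.+1).
  apply/negP => xL; move/setP: HRS => /(_ x).
  by rewrite -HAL -HBL !inE xA xB xL.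
have xT : x \in A :\: R by rewrite -HAL !inE xA (negbTE xL).
have xV : x \in B :\: S by rewrite -HBL !inE xB (negbTE xL).
by apply/negP => /disjointFr /(_ xT); rewrite xV.
Qed.

(* The key use of initiality: if A ∈ F and B ∈ G have disjoint traces P, Q
   on [k+1], then A \ P and B \ Q share more than |[k+1] \ (P ∪ Q)| points.
   Otherwise the shared points of A could be traded for as many points of
   [k+1] \ (P ∪ Q), giving a set of F (it precedes A in the shift order)
   that misses B. *)
Lemma restr_overlap n k (F G : {set {set 'I_n}}) (P Q A B : {set 'I_n}) :
  k_uniform k F -> initial k F -> cross_intersecting F G ->
  [disjoint P & Q] -> A \in F -> A :&: firstk n k.+1 = P ->
  B \in G -> B :&: firstk n k.+1 = Q ->
  #|firstk n k.+1 :\: (P :|: Q)| < #|(A :\: P) :&: (B :\: Q)|.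
Proof.
move=> HF HiF HFG HPQ HA HAL HB HBL.
set W := firstk n k.+1 :\: (P :|: Q); set I := (A :\: P) :&: (B :\: Q).
rewrite ltnNge; apply/negP => HIW.
have [J] : exists J, J \in layer W #|I|.
  by apply/card_gt0P; rewrite card_layer bin_gt0.
rewrite inE => /andP [HJW /eqP HJc].
have JL x : x \in J -> [/\ val x <= k, x \notin P & x \notin Q].
  by move/(subsetP HJW); rewrite !inE negb_or ltnS => /andP [/andP [-> ->] ->].
have IL x : x \in I -> [/\ k < val x, x \in A & x \in B].
  rewrite !inE -HAL !inE ltnS => /and3P [/andP [xP xA] _ xB].
  by rewrite xA -ltnNge in xP.
have HIA : I \subset A by apply/subsetP => x /IL [].
have HJA : [disjoint J & A].
  apply/pred0P => x /=; apply/negP => /andP [/JL [xL xP _] xA].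
  by move: xP; rewrite -HAL !inE xA ltnS xL.
have [cardA' shiftA'] := shift_le_swap (HF A HA) HIA HJA HJc
  (fun x xJ => let: And3 xL _ _ := JL x xJ in xL)
  (fun x xI => let: And3 xL _ _ := IL x xI in xL).
have /set0Pn [x] := HFG _ _ (HiF _ _ cardA' HA shiftA') HB.
rewrite !inE => /andP [/orP [/andP [xI xA] | xJ] xB].
- case xL: (val x <= k).
    have xP : x \in P by rewrite -HAL !inE xA ltnS xL.
    have xQ : x \in Q by rewrite -HBL !inE xB ltnS xL.
    by move: (disjointFr HPQ xP); rewrite xQ.
  by move: xI; rewrite -HAL -HBL !inE xA xB ltnS xL.
- have [xL _ xQ] := JL x xJ.
  by move: xQ; rewrite -HBL !inE xB ltnS xL.
Qed.

(* Consequently, with |P| = |Q| = i, a member of G(Q) has fewer than i - 1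
   points outside any member of F(P), so each of its (i-1)-subsets meets
   every member of F(P). *)
Lemma restr_subsets_meet n k i (F G : {set {set 'I_n}}) (P Q T U V : {set 'I_n}) :
  k < n -> 2 <= i -> 2 * i <= k ->
  k_uniform k F -> k_uniform k G -> initial k F -> cross_intersecting F G ->
  P \subset firstk n k.+1 -> #|P| = i -> Q \subset firstk n k.+1 -> #|Q| = i ->
  [disjoint P & Q] ->
  T \in restr k F P -> U \in restr k G Q -> V \subset U -> #|V| = i - 1 ->
  ~~ [disjoint T & V].
Proof.
move=> Hkn Hi2 Hik HF HG HiF HFG HPL HPc HQL HQc HPQ.
move=> /restrP [A HA [HAL ->]] /restrP [B HB [HBL ->]] HVU HVc.
have overlap := restr_overlap HF HiF HFG HPQ HA HAL HB HBL.
have cardW : #|firstk n k.+1 :\: (P :|: Q)| = k.+1 - 2 * i.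
  rewrite cardsDS ?subUset ?HPL // cardsU (disjoint_setI0 HPQ) cards0.
  by rewrite card_firstk // HPc HQc; lia.
have cardU : #|B :\: Q| = k - i by rewrite cardsDS -?HBL ?subsetIl // HG // HBL HQc.
apply/negP => Hd.
have : V \subset (B :\: Q) :\: (A :\: P) by rewrite subsetD HVU disjoint_sym Hd.
move/subset_leq_card; rewrite cardsD cardU HVc setIC.
by move: overlap; rewrite cardW; lia.
Qed.

Theorem lemma3p2 (n k i : nat) (F G : {set {set 'I_n}}) (P Q : {set 'I_n}) :
  4 <= 2 * k -> 2 * k <= n ->
  k_uniform k F -> k_uniform k G ->
  nontrivial F -> nontrivial G ->
  cross_intersecting F G ->
  initial k F -> initial k G ->
  2 <= i -> 2 * i <= k ->
  P \subset firstk n k.+1 -> #|P| = i ->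
  Q \subset firstk n k.+1 -> #|Q| = i ->
  [disjoint P & Q] ->
  #|restr k F P| + #|restr k G Q|
    + #|restr k G (firstk n k.+1 :\: P)| + #|restr k F (firstk n k.+1 :\: Q)|
  <= 'C(n - k.+1, k - i) + 'C(n - k.+1, i - 1).
Proof.
move=> _ Hn HF HG _ _ HFG HiF _ Hi2 Hik HPL HPc HQL HQc HPQ.
set L := firstk n k.+1.
have cardY : #|~: L| = n - k.+1.
  by have := cardsC L; rewrite card_ord card_firstk; lia.
have cardLD (R : {set 'I_n}) : R \subset L -> #|R| = i -> k - #|L :\: R| = i - 1.
  by move=> HR HRc; rewrite cardsDS // card_firstk ?HRc; lia.
have disjL (R : {set 'I_n}) : R :&: (L :\: R) = set0.
  by rewrite setDE setICA setICr setI0.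
rewrite -cardY; apply: (four_families_bound (al := k - i) (be := i - 1)).
- lia.
- rewrite cardY; lia.
- by rewrite -HPc; apply: restr_layer.
- by rewrite -HQc; apply: restr_layer.
- by rewrite -(cardLD P) //; apply: restr_layer (subsetDl L P).
- by rewrite -(cardLD Q) //; apply: restr_layer (subsetDl L Q).
- by move=> S V; apply: restr_cross HFG (disjL P).
- move=> U V Ub Vd; rewrite disjoint_sym.
  by apply: (restr_cross HFG _ Vd Ub); rewrite setIC disjL.
- move=> S U V; apply: (restr_subsets_meet (i := i)) => //; lia.
Qed.
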